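(* There exist full amicable orthogonal designs $AOD\big(16;\ 2,2,2,10;\ 2,2,2,10\big)$ and $AOD\big(24;\ 2,2,2,18;\ 2,2,2,18\big)$. Consequently, for every integer $n>4$ there exists a full $$AOD\Big(2^n;\ 2^{n-3}_{(3)},\,10,\,10,\,5\cdot2^2,\ldots,5\cdot2^{n-4};\ 2^{n-3}_{(3)},\,5\cdot2^{n-3}\Big),$$ and for every integer $n>3$ there exists a full $$AOD\Big(3\cdot2^n;\ 2^{n-2}_{(3)},\,18,\,18,\,9\cdot2^2,\ldots,9\cdot2^{n-3};\ 2^{n-2}_{(3)},\,9\cdot2^{n-2}\Big).$$ (In the first type the entries after $10,10$ are $5\cdot 2^j$ for $j=2,\ldots,n-4$, and analogously for the second.)
   Context: The notation $u_{(k)}$ in a type means that $u$ is repeated $k$ times. An orthogonal design $OD(m;c_1,\ldots,c_k)$ is an $m\times m$ matrix $X$ with entries from $\{0,\pm x_1,\ldots,\pm x_k\}$, where $x_1,\ldots,x_k$ are commuting indeterminates, such that $XX^{\rm T}=(\sum_j c_jx_j^2)I_m$. An amicable orthogonal design $AOD(m;c_1,\ldots,c_k;d_1,\ldots,d_\ell)$ is a pair $(X;Y)$ where $X$ is an $OD(m;c_1,\ldots,c_k)$ in indeterminates $x_1,\ldots,x_k$, $Y$ is an $OD(m;d_1,\ldots,d_\ell)$ in indeterminates $y_1,\ldots,y_\ell$ disjoint from the $x_i$, and $XY^{\rm T}=YX^{\rm T}$. It is full if neither $X$ nor $Y$ has a zero entry. *)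

From HB Require Import structures.
From mathcomp Require Import all_boot all_order all_algebra.
Set Implicit Arguments. Unset Strict Implicit. Unset Printing Implicit Defensive.
Import GRing.Theory.
Local Open Scope ring_scope.

(* An entry of a design in k indeterminates x_0..x_{k-1}:
   None = 0, Some (false, j) = + x_j, Some (true, j) = - x_j. *)
Definition entry (k : nat) := option (bool * 'I_k).

Definition eval_entry (R : pzRingType) (k : nat) (x : 'I_k -> R) (e : entry k) : R :=
  match e with
  | None => 0
  | Some (s, j) => (-1) ^+ s * x j
  end.

Definition eval_mx (R : pzRingType) (k m : nat) (x : 'I_k -> R)
  (X : 'M[entry k]_m) : 'M[R]_m := map_mx (eval_entry x) X.

(* X is an OD(m; c_1,...,c_k): X X^T = (sum_j c_j x_j^2) I_m as a polynomial
   identity in commuting indeterminates, i.e. under every substitution of the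
   indeterminates by elements of any commutative ring. *)
Definition is_OD (m : nat) (c : seq nat) (X : 'M[entry (size c)]_m) : Prop :=
  forall (R : comNzRingType) (x : 'I_(size c) -> R),
    eval_mx x X *m (eval_mx x X)^T
    = (\sum_(j < size c) (nth 0%N c j)%:R * x j ^+ 2)%:M.

Definition is_AOD (m : nat) (c d : seq nat)
  (X : 'M[entry (size c)]_m) (Y : 'M[entry (size d)]_m) : Prop :=
  [/\ is_OD X, is_OD Y &
      forall (R : comNzRingType) (x : 'I_(size c) -> R) (y : 'I_(size d) -> R),
        eval_mx x X *m (eval_mx y Y)^T = eval_mx y Y *m (eval_mx x X)^T].

Definition full_design (k m : nat) (X : 'M[entry k]_m) : Prop :=
  forall i j, X i j != None.

Definition exists_full_AOD (m : nat) (c d : seq nat) : Prop :=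
  exists (X : 'M[entry (size c)]_m) (Y : 'M[entry (size d)]_m),
    [/\ is_AOD X Y, full_design X & full_design Y].

(* The two base designs are given by explicit tables.  Their entries are linear in
   the indeterminates, so the defining identities of an AOD amount to identities
   between the integer coefficients of the quadratic forms X X^T, Y Y^T and X Y^T,
   which are checked by computation.
   The families come from a doubling construction: if (X; Y) is a full AOD of order m
   and X = A + x_s E isolates the indeterminate x_s, then, with x_t fresh,
     ([A + x_s E, A + x_t E; A - x_t E, -A + x_s E]; [Y, Y; Y, -Y])
   is a full AOD of order 2m.  The cross terms cancel because polarizing X X^T gives
   A E^T + E A^T = 0, and x_s and x_t both keep the weight of x_s while every other
   weight, of X and of Y, doubles.  Starting from the designs of orders 16 and 24 and
   always splitting off an indeterminate of weight 2w (w = 5, 9) gives the families. *)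

From mathcomp Require Import all_boot all_order all_algebra.
From mathcomp Require Import ring zify.

Set Implicit Arguments. Unset Strict Implicit. Unset Printing Implicit Defensive.
Import GRing.Theory.
Local Open Scope ring_scope.

Definition weighted_OD m k (c : 'I_k -> nat) (X : 'M[entry k]_m) : Prop :=
  forall (R : comNzRingType) (x : 'I_k -> R),
    eval_mx x X *m (eval_mx x X)^T = (\sum_(j < k) (c j)%:R * x j ^+ 2)%:M.

Definition amicable m k l (X : 'M[entry k]_m) (Y : 'M[entry l]_m) : Prop :=
  forall (R : comNzRingType) (x : 'I_k -> R) (y : 'I_l -> R),
    eval_mx x X *m (eval_mx y Y)^T = eval_mx y Y *m (eval_mx x X)^T.

Definition full_weighted_AOD m k l (c : 'I_k -> nat) (d : 'I_l -> nat) : Prop :=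
  exists (X : 'M[entry k]_m) (Y : 'M[entry l]_m),
    [/\ [/\ weighted_OD c X, weighted_OD d Y & amicable X Y],
        full_design X & full_design Y].

Lemma full_weighted_AOD_nth m (c d : seq nat) :
  exists_full_AOD m c d ->
  full_weighted_AOD m (fun j : 'I_(size c) => nth 0%N c j)
                      (fun j : 'I_(size d) => nth 0%N d j).
Proof. by []. Qed.

Lemma exists_full_AOD_weighted m k l (c d : seq nat)
    (c' : 'I_k -> nat) (d' : 'I_l -> nat) :
  size c = k -> size d = l ->
  (forall j, c' j = nth 0%N c j) -> (forall j, d' j = nth 0%N d j) ->
  full_weighted_AOD m c' d' -> exists_full_AOD m c d.
Proof.
move=> Ec Ed; subst k l => Ec' Ed' [X [Y [[HX HY HXY] fX fY]]].
exists X, Y; split=> //; split=> // R x.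
- by rewrite HX; under eq_bigr do rewrite Ec'.
- by rewrite HY; under eq_bigr do rewrite Ed'.
Qed.

Section Polarization.
Variables (R : comNzRingType) (k m : nat) (X : 'M[entry k]_m).

Lemma eval_mxD (p q : 'I_k -> R) :
  eval_mx (fun v => p v + q v) X = eval_mx p X + eval_mx q X.
Proof.
by apply/matrixP => i j; rewrite !mxE; case: (X i j) => [[b v]|] /=;
  rewrite ?mulrDr ?addr0.
Qed.

Lemma weighted_OD_polar (c : 'I_k -> nat) (p q : 'I_k -> R) :
  weighted_OD c X -> (forall v, p v * q v = 0) ->
  eval_mx p X *m (eval_mx q X)^T + eval_mx q X *m (eval_mx p X)^T = 0.
Proof.
move=> HX pq; have := HX R (fun v => p v + q v).
rewrite eval_mxD linearD /= mulmxDl !mulmxDr !HX.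
have -> : \sum_(j < k) (c j)%:R * (p j + q j) ^+ 2 =
          \sum_(j < k) (c j)%:R * p j ^+ 2 + \sum_(j < k) (c j)%:R * q j ^+ 2.
  by rewrite -big_split; apply: eq_bigr => j _; rewrite sqrrD pq mul0rn addr0 mulrDr.
rewrite raddfD /= [_ + _%:M in LHS]addrC addrACA -{2}[_%:M + _%:M]addr0.
exact: addrI.
Qed.

End Polarization.

Definition entry_coef k (j : 'I_k) (e : entry k) : int :=
  if e is Some (b, i) then (if i == j then (-1) ^+ b else 0) else 0.

Lemma eval_entry_coef (R : comNzRingType) k (x : 'I_k -> R) e :
  eval_entry x e = \sum_j (entry_coef j e)%:~R * x j.
Proof.
case: e => [[b i]|]; last by rewrite big1 // => j _; rewrite mul0r.
rewrite (bigD1 i) //= eqxx big1 ?addr0 => [|j]; first by rewrite rmorph_sign.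
by rewrite eq_sym => /negbTE ->; rewrite mul0r.
Qed.

Definition gram_coef m k l (X : 'M[entry k]_m) (Y : 'M[entry l]_m)
    (i : 'I_k) (j : 'I_l) (a b : 'I_m) : int :=
  \sum_(c < m) entry_coef i (X a c) * entry_coef j (Y b c).

Lemma eval_mx_gram (R : comNzRingType) m k l (X : 'M[entry k]_m)
    (Y : 'M[entry l]_m) (x : 'I_k -> R) (y : 'I_l -> R) a b :
  (eval_mx x X *m (eval_mx y Y)^T) a b =
  \sum_i \sum_j x i * y j * (gram_coef X Y i j a b)%:~R.
Proof.
rewrite !mxE.
under eq_bigr => c _ do rewrite !mxE !eval_entry_coef mulr_suml.
rewrite exchange_big /=; apply: eq_bigr => i _.
under eq_bigr => c _ do rewrite mulr_sumr.
rewrite exchange_big /=; apply: eq_bigr => j _.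
rewrite /gram_coef rmorph_sum mulr_sumr; apply: eq_bigr => c _.
by rewrite rmorphM /=; ring.
Qed.

Lemma sum_skew_offdiag (V : zmodType) k (f : 'I_k -> 'I_k -> V) :
  (forall i j, i != j -> f i j + f j i = 0) ->
  \sum_i \sum_j f i j = \sum_i f i i.
Proof.
elim: k f => [|k IHk] f skew; first by rewrite !big_ord0.
rewrite big_ord_recr /= big_ord_recr /= [RHS]big_ord_recr /=.
under eq_bigr do rewrite big_ord_recr /=.
rewrite big_split /= (IHk (fun i j => f (widen_ord (leqnSn k) i) (widen_ord (leqnSn k) j))).
  rewrite -!addrA; congr (_ + _); rewrite addrA -big_split big1 ?add0r // => i _.
  by apply: skew; rewrite neq_ltn /= ltn_ord.
by move=> i j ij; apply: skew; apply: contra ij => /eqP [] /val_inj ->.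
Qed.

Lemma weighted_OD_gram m k (c : 'I_k -> nat) (X : 'M[entry k]_m) :
  (forall i a b, gram_coef X X i i a b = if a == b then (c i)%:Z else 0) ->
  (forall i j a b, i != j -> gram_coef X X i j a b + gram_coef X X j i a b = 0) ->
  weighted_OD c X.
Proof.
move=> diag skew R x; apply/matrixP => a b.
rewrite eval_mx_gram
  (sum_skew_offdiag (f := fun i j => x i * x j * (gram_coef X X i j a b)%:~R)).
  rewrite mxE; under eq_bigr do rewrite diag.
  case: eqP => _; last by rewrite mulr0n big1 // => i _; rewrite mulr0.
  by rewrite mulr1n; apply: eq_bigr => i _; rewrite expr2 mulrC.
by move=> i j ij; rewrite [x j * _]mulrC -mulrDr -rmorphD /= skew // mulr0.
Qed.

Lemma amicable_gram m k l (X : 'M[entry k]_m) (Y : 'M[entry l]_m) :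
  (forall i j a b, gram_coef X Y i j a b = gram_coef X Y i j b a) -> amicable X Y.
Proof.
move=> sym R x y; apply/matrixP => a b.
rewrite -(trmxK (eval_mx y Y *m _)) trmx_mul trmxK [in RHS]mxE !eval_mx_gram.
by apply: eq_bigr => i _; apply: eq_bigr => j _; rewrite sym.
Qed.

(* Entry n of a table stands for (-1)^n x_(n/2); the index is decoded with inZp
   (reduction modulo k+1) rather than inord, whose proof term blocks computation. *)
Definition table_entry k (n : nat) : entry k.+1 := Some (odd n, inZp n./2).

Definition table_design k m (L : seq (seq nat)) : 'M[entry k.+1]_m :=
  \matrix_(a, b) table_entry k (nth 0%N (nth [::] L a) b).

Definition table_gram k m (L L' : seq (seq nat)) (i j a b : nat) : int :=
  foldr +%R 0 [seq entry_coef (inZp i) (table_entry k (nth 0%N (nth [::] L a) c)) *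
                   entry_coef (inZp j) (table_entry k (nth 0%N (nth [::] L' b) c))
              | c <- iota 0 m].

Lemma gram_coef_table k m L L' i j a b :
  gram_coef (table_design k m L) (table_design k m L') i j a b = table_gram k m L L' i j a b.
Proof.
rewrite /table_gram !valZpK foldrE big_map.
have -> : iota 0 m = index_iota 0 m by rewrite /index_iota subn0.
by rewrite big_mkord; apply: eq_bigr => c _; rewrite !mxE.
Qed.

Definition all_indices (n m : nat) (P : nat -> nat -> nat -> nat -> bool) : bool :=
  all (fun i => all (fun j => all (fun a => all (fun b => P i j a b)
    (iota 0 m)) (iota 0 m)) (iota 0 n)) (iota 0 n).

Lemma all_indicesP n m P :
  all_indices n m P -> forall (i j : 'I_n) (a b : 'I_m), P i j a b.
Proof.
have mem_iota_ord p (i : 'I_p) : (i : nat) \in iota 0 p by rewrite mem_iota /=.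
move=> chk i j a b.
by move: chk => /allP/(_ i (mem_iota_ord _ _))/allP/(_ j (mem_iota_ord _ _))
  /allP/(_ a (mem_iota_ord _ _))/allP/(_ b (mem_iota_ord _ _)).
Qed.

Definition table_OD_check k m (L : seq (seq nat)) (c : seq nat) : bool :=
  all_indices k.+1 m (fun i j a b =>
    if i == j then table_gram k m L L i i a b == (if a == b then (nth 0%N c i)%:Z else 0)
    else table_gram k m L L i j a b + table_gram k m L L j i a b == 0).

Definition table_amicable_check k m (L L' : seq (seq nat)) : bool :=
  all_indices k.+1 m (fun i j a b =>
    table_gram k m L L' i j a b == table_gram k m L L' i j b a).

Lemma table_OD_checkP k m L c :
  table_OD_check k m L c -> weighted_OD (fun j : 'I_k.+1 => nth 0%N c j) (table_design k m L).
Proof.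
move/all_indicesP => chk; apply: weighted_OD_gram => [i a b | i j a b ij].
  by rewrite gram_coef_table; move: (chk i i a b); rewrite eqxx => /eqP.
rewrite !gram_coef_table; move: (chk i j a b).
by rewrite (inj_eq val_inj) (negbTE ij) => /eqP.
Qed.

Lemma table_amicable_checkP k m L L' :
  table_amicable_check k m L L' -> amicable (table_design k m L) (table_design k m L').
Proof.
move/all_indicesP => chk; apply: amicable_gram => i j a b.
by rewrite !gram_coef_table; apply/eqP/chk.
Qed.

Lemma exists_full_AOD_table m k (c d : seq nat) (L L' : seq (seq nat)) :
  size c = k.+1 -> size d = k.+1 ->
  table_OD_check k m L c -> table_OD_check k m L' d -> table_amicable_check k m L L' ->
  exists_full_AOD m c d.
Proof.
move=> Ec Ed HX HY HXY.
apply: (exists_full_AOD_weighted Ec Ed (fun _ => erefl) (fun _ => erefl)).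
exists (table_design k m L), (table_design k m L').
split; [split | by move=> a b; rewrite mxE..].
- exact: table_OD_checkP.
- exact: table_OD_checkP.
- exact: table_amicable_checkP.
Qed.

Definition table_X16 : seq (seq nat) :=
  [:: [:: 7; 7; 5; 5; 6; 6; 0; 0; 7; 7; 6; 6; 3; 3; 7; 7];
     [:: 6; 7; 5; 4; 7; 6; 0; 1; 6; 7; 7; 6; 3; 2; 6; 7];
     [:: 4; 4; 7; 7; 0; 0; 7; 7; 6; 6; 6; 6; 6; 6; 3; 3];
     [:: 4; 5; 6; 7; 0; 1; 6; 7; 7; 6; 7; 6; 7; 6; 3; 2];
     [:: 7; 7; 1; 1; 7; 7; 5; 5; 3; 3; 7; 7; 6; 6; 7; 7];
     [:: 6; 7; 1; 0; 6; 7; 5; 4; 3; 2; 6; 7; 7; 6; 6; 7];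
     [:: 1; 1; 6; 6; 4; 4; 7; 7; 7; 7; 2; 2; 6; 6; 6; 6];
     [:: 1; 0; 7; 6; 4; 5; 6; 7; 6; 7; 2; 3; 7; 6; 7; 6];
     [:: 6; 6; 7; 7; 2; 2; 6; 6; 7; 7; 5; 5; 6; 6; 0; 0];
     [:: 7; 6; 6; 7; 2; 3; 7; 6; 6; 7; 5; 4; 7; 6; 0; 1];
     [:: 7; 7; 7; 7; 6; 6; 3; 3; 4; 4; 7; 7; 1; 1; 6; 6];
     [:: 6; 7; 6; 7; 7; 6; 3; 2; 4; 5; 6; 7; 1; 0; 7; 6];
     [:: 2; 2; 7; 7; 7; 7; 7; 7; 7; 7; 0; 0; 7; 7; 4; 4];
     [:: 2; 3; 6; 7; 6; 7; 6; 7; 6; 7; 0; 1; 6; 7; 4; 5];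
     [:: 6; 6; 2; 2; 6; 6; 7; 7; 1; 1; 7; 7; 5; 5; 7; 7];
     [:: 7; 6; 2; 3; 7; 6; 6; 7; 1; 0; 6; 7; 5; 4; 6; 7]].

Definition table_Y16 : seq (seq nat) :=
  [:: [:: 6; 6; 6; 7; 7; 7; 4; 5; 2; 3; 7; 7; 0; 1; 6; 6];
     [:: 7; 6; 6; 6; 6; 7; 4; 4; 3; 3; 6; 7; 0; 0; 7; 6];
     [:: 0; 1; 7; 7; 6; 7; 7; 7; 6; 6; 2; 3; 6; 6; 5; 4];
     [:: 0; 0; 6; 7; 6; 6; 6; 7; 7; 6; 3; 3; 7; 6; 5; 5];
     [:: 6; 6; 4; 5; 6; 6; 7; 6; 0; 1; 6; 6; 3; 2; 6; 6];
     [:: 7; 6; 4; 4; 7; 6; 7; 7; 0; 0; 7; 6; 2; 2; 7; 6];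
     [:: 6; 7; 6; 6; 1; 0; 7; 7; 7; 7; 4; 5; 6; 6; 2; 3];
     [:: 6; 6; 7; 6; 1; 1; 6; 7; 6; 7; 4; 4; 7; 6; 3; 3];
     [:: 2; 3; 7; 7; 5; 4; 6; 6; 7; 7; 1; 0; 6; 6; 7; 6];
     [:: 3; 3; 6; 7; 5; 5; 7; 6; 6; 7; 1; 1; 7; 6; 7; 7];
     [:: 6; 6; 2; 3; 7; 7; 1; 0; 7; 6; 6; 6; 4; 5; 7; 7];
     [:: 7; 6; 3; 3; 6; 7; 1; 1; 7; 7; 7; 6; 4; 4; 6; 7];
     [:: 5; 4; 7; 7; 3; 2; 7; 7; 7; 7; 6; 7; 7; 7; 1; 0];
     [:: 5; 5; 6; 7; 2; 2; 6; 7; 6; 7; 6; 6; 6; 7; 1; 1];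
     [:: 7; 7; 0; 1; 7; 7; 2; 3; 5; 4; 6; 6; 7; 6; 6; 6];
     [:: 6; 7; 0; 0; 6; 7; 3; 3; 5; 5; 7; 6; 7; 7; 7; 6]].

Definition table_X24 : seq (seq nat) :=
  [:: [:: 6; 6; 6; 6; 6; 6; 7; 6; 0; 7; 6; 0; 7; 6; 2; 7; 6; 2; 7; 6; 4; 7; 6; 4];
     [:: 6; 6; 6; 6; 6; 6; 6; 0; 7; 6; 0; 7; 6; 2; 7; 6; 2; 7; 6; 4; 7; 6; 4; 7];
     [:: 6; 6; 6; 6; 6; 6; 0; 7; 6; 0; 7; 6; 2; 7; 6; 2; 7; 6; 4; 7; 6; 4; 7; 6];
     [:: 7; 7; 7; 6; 6; 6; 7; 6; 0; 6; 7; 1; 7; 6; 2; 6; 7; 3; 7; 6; 4; 6; 7; 5];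
     [:: 7; 7; 7; 6; 6; 6; 6; 0; 7; 7; 1; 6; 6; 2; 7; 7; 3; 6; 6; 4; 7; 7; 5; 6];
     [:: 7; 7; 7; 6; 6; 6; 0; 7; 6; 1; 6; 7; 2; 7; 6; 3; 6; 7; 4; 7; 6; 5; 6; 7];
     [:: 6; 7; 1; 6; 7; 1; 6; 6; 6; 6; 6; 6; 7; 6; 5; 6; 7; 4; 6; 7; 2; 7; 6; 3];
     [:: 7; 1; 6; 7; 1; 6; 6; 6; 6; 6; 6; 6; 6; 5; 7; 7; 4; 6; 7; 2; 6; 6; 3; 7];
     [:: 1; 6; 7; 1; 6; 7; 6; 6; 6; 6; 6; 6; 5; 7; 6; 4; 6; 7; 2; 6; 7; 3; 7; 6];
     [:: 6; 7; 1; 7; 6; 0; 7; 7; 7; 6; 6; 6; 6; 7; 4; 6; 7; 4; 7; 6; 3; 7; 6; 3];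
     [:: 7; 1; 6; 6; 0; 7; 7; 7; 7; 6; 6; 6; 7; 4; 6; 7; 4; 6; 6; 3; 7; 6; 3; 7];
     [:: 1; 6; 7; 0; 7; 6; 7; 7; 7; 6; 6; 6; 4; 6; 7; 4; 6; 7; 3; 7; 6; 3; 7; 6];
     [:: 6; 7; 3; 6; 7; 3; 6; 7; 4; 7; 6; 5; 6; 6; 6; 6; 6; 6; 7; 6; 1; 6; 7; 0];
     [:: 7; 3; 6; 7; 3; 6; 7; 4; 6; 6; 5; 7; 6; 6; 6; 6; 6; 6; 6; 1; 7; 7; 0; 6];
     [:: 3; 6; 7; 3; 6; 7; 4; 6; 7; 5; 7; 6; 6; 6; 6; 6; 6; 6; 1; 7; 6; 0; 6; 7];
     [:: 6; 7; 3; 7; 6; 2; 7; 6; 5; 7; 6; 5; 7; 7; 7; 6; 6; 6; 6; 7; 0; 6; 7; 0];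
     [:: 7; 3; 6; 6; 2; 7; 6; 5; 7; 6; 5; 7; 7; 7; 7; 6; 6; 6; 7; 0; 6; 7; 0; 6];
     [:: 3; 6; 7; 2; 7; 6; 5; 7; 6; 5; 7; 6; 7; 7; 7; 6; 6; 6; 0; 6; 7; 0; 6; 7];
     [:: 6; 7; 5; 6; 7; 5; 7; 6; 3; 6; 7; 2; 6; 7; 0; 7; 6; 1; 6; 6; 6; 6; 6; 6];
     [:: 7; 5; 6; 7; 5; 6; 6; 3; 7; 7; 2; 6; 7; 0; 6; 6; 1; 7; 6; 6; 6; 6; 6; 6];
     [:: 5; 6; 7; 5; 6; 7; 3; 7; 6; 2; 6; 7; 0; 6; 7; 1; 7; 6; 6; 6; 6; 6; 6; 6];
     [:: 6; 7; 5; 7; 6; 4; 6; 7; 2; 6; 7; 2; 7; 6; 1; 7; 6; 1; 7; 7; 7; 6; 6; 6];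
     [:: 7; 5; 6; 6; 4; 7; 7; 2; 6; 7; 2; 6; 6; 1; 7; 6; 1; 7; 7; 7; 7; 6; 6; 6];
     [:: 5; 6; 7; 4; 7; 6; 2; 6; 7; 2; 6; 7; 1; 7; 6; 1; 7; 6; 7; 7; 7; 6; 6; 6]].

Definition table_Y24 : seq (seq nat) :=
  [:: [:: 6; 6; 6; 6; 6; 6; 7; 6; 4; 7; 6; 4; 7; 6; 2; 7; 6; 2; 7; 6; 0; 7; 6; 0];
     [:: 6; 6; 6; 6; 6; 6; 2; 7; 6; 0; 7; 6; 0; 7; 6; 4; 7; 6; 4; 7; 6; 2; 7; 6];
     [:: 6; 6; 6; 6; 6; 6; 6; 0; 7; 6; 2; 7; 6; 4; 7; 6; 0; 7; 6; 2; 7; 6; 4; 7];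
     [:: 6; 6; 6; 7; 7; 7; 6; 7; 5; 7; 6; 4; 6; 7; 3; 7; 6; 2; 6; 7; 1; 7; 6; 0];
     [:: 6; 6; 6; 7; 7; 7; 3; 6; 7; 0; 7; 6; 1; 6; 7; 4; 7; 6; 5; 6; 7; 2; 7; 6];
     [:: 6; 6; 6; 7; 7; 7; 7; 1; 6; 6; 2; 7; 7; 5; 6; 6; 0; 7; 7; 3; 6; 6; 4; 7];
     [:: 7; 6; 4; 7; 6; 4; 7; 7; 7; 7; 7; 7; 6; 7; 1; 7; 6; 0; 7; 6; 2; 6; 7; 3];
     [:: 0; 7; 6; 2; 7; 6; 7; 7; 7; 7; 7; 7; 5; 6; 7; 2; 7; 6; 0; 7; 6; 5; 6; 7];
     [:: 6; 2; 7; 6; 0; 7; 7; 7; 7; 7; 7; 7; 7; 3; 6; 6; 4; 7; 6; 4; 7; 7; 1; 6];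
     [:: 6; 7; 5; 7; 6; 4; 7; 7; 7; 6; 6; 6; 6; 7; 1; 6; 7; 1; 7; 6; 2; 7; 6; 2];
     [:: 1; 6; 7; 2; 7; 6; 7; 7; 7; 6; 6; 6; 5; 6; 7; 3; 6; 7; 0; 7; 6; 4; 7; 6];
     [:: 7; 3; 6; 6; 0; 7; 7; 7; 7; 6; 6; 6; 7; 3; 6; 7; 5; 6; 6; 4; 7; 6; 0; 7];
     [:: 7; 6; 2; 7; 6; 2; 7; 6; 0; 6; 7; 1; 7; 7; 7; 7; 7; 7; 6; 7; 5; 7; 6; 4];
     [:: 4; 7; 6; 0; 7; 6; 4; 7; 6; 3; 6; 7; 7; 7; 7; 7; 7; 7; 3; 6; 7; 0; 7; 6];
     [:: 6; 0; 7; 6; 4; 7; 6; 2; 7; 7; 5; 6; 7; 7; 7; 7; 7; 7; 7; 1; 6; 6; 2; 7];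
     [:: 6; 7; 3; 7; 6; 2; 7; 6; 0; 7; 6; 0; 7; 7; 7; 6; 6; 6; 6; 7; 5; 6; 7; 5];
     [:: 5; 6; 7; 0; 7; 6; 4; 7; 6; 2; 7; 6; 7; 7; 7; 6; 6; 6; 3; 6; 7; 1; 6; 7];
     [:: 7; 1; 6; 6; 4; 7; 6; 2; 7; 6; 4; 7; 7; 7; 7; 6; 6; 6; 7; 1; 6; 7; 3; 6];
     [:: 7; 6; 0; 7; 6; 0; 6; 7; 3; 7; 6; 2; 7; 6; 4; 6; 7; 5; 7; 7; 7; 7; 7; 7];
     [:: 2; 7; 6; 4; 7; 6; 1; 6; 7; 4; 7; 6; 2; 7; 6; 1; 6; 7; 7; 7; 7; 7; 7; 7];
     [:: 6; 4; 7; 6; 2; 7; 7; 5; 6; 6; 0; 7; 6; 0; 7; 7; 3; 6; 7; 7; 7; 7; 7; 7];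
     [:: 6; 7; 1; 7; 6; 0; 6; 7; 3; 6; 7; 3; 7; 6; 4; 7; 6; 4; 7; 7; 7; 6; 6; 6];
     [:: 3; 6; 7; 4; 7; 6; 1; 6; 7; 5; 6; 7; 2; 7; 6; 0; 7; 6; 7; 7; 7; 6; 6; 6];
     [:: 7; 5; 6; 6; 2; 7; 7; 5; 6; 7; 1; 6; 6; 0; 7; 6; 2; 7; 7; 7; 7; 6; 6; 6]].


Lemma exists_full_AOD_16 : exists_full_AOD 16 [:: 2; 2; 2; 10]%N [:: 2; 2; 2; 10]%N.
Proof. by apply: (@exists_full_AOD_table _ 3 _ _ table_X16 table_Y16); vm_compute. Qed.

Lemma exists_full_AOD_24 : exists_full_AOD 24 [:: 2; 2; 2; 18]%N [:: 2; 2; 2; 18]%N.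
Proof. by apply: (@exists_full_AOD_table _ 3 _ _ table_X24 table_Y24); vm_compute. Qed.

Section DoubleBlocks.
Variables (R : comNzRingType) (n : nat) (A E Y : 'M[R]_n) (b z : R).

Let D := block_mx (A + b *: E) (A + z *: E) (A - z *: E) (- A + b *: E).
Let Y2 := block_mx Y Y Y (- Y).

Lemma double_block_gram (alpha gamma : R) :
  A *m A^T = alpha%:M -> E *m E^T = gamma%:M -> A *m E^T + E *m A^T = 0 ->
  D *m D^T = (alpha *+ 2 + gamma * (b ^+ 2 + z ^+ 2))%:M.
Proof.
move=> AA EE /eqP; rewrite addr_eq0 => /eqP EA.
rewrite tr_block_mx !linearD !linearN !linearZ /=.
rewrite mulmx_block (scalar_mx_block n n).
have -> : (alpha *+ 2 + gamma * (b ^+ 2 + z ^+ 2))%:M =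
          alpha%:M *+ 2 + (b ^+ 2 + z ^+ 2) *: gamma%:M :> 'M_n.
  by rewrite scale_scalar_mx raddfD raddfMn [_ * gamma]mulrC.
rewrite !(mulmxDl, mulmxDr, mulNmx, mulmxN) -!(scalemxAl, scalemxAr).
rewrite ?(mulNmx, mulmxN, scalerN) AA EE EA; move: alpha%:M gamma%:M (E *m A^T) => Ma Mg P.
by congr block_mx; apply/matrixP => i j; rewrite !mxE; ring.
Qed.

Lemma double_block_amicable :
  A *m Y^T = Y *m A^T -> E *m Y^T = Y *m E^T -> D *m Y2^T = Y2 *m D^T.
Proof.
move=> AY EY; rewrite !tr_block_mx !linearD !linearN !linearZ /= !mulmx_block.
rewrite !(mulmxDl, mulmxDr, mulNmx, mulmxN) -!(scalemxAl, scalemxAr).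
rewrite ?(mulNmx, mulmxN, scalerN) AY EY.
move: (Y *m A^T) (Y *m E^T) => P Q.
by congr block_mx; apply/matrixP => i j; rewrite !mxE; ring.
Qed.

Lemma double_partner_gram (beta : R) : Y *m Y^T = beta%:M -> Y2 *m Y2^T = (beta *+ 2)%:M.
Proof.
move=> YY; rewrite tr_block_mx mulmx_block (scalar_mx_block n n).
rewrite raddfN /= !(mulNmx, mulmxN) opprK YY subrr.
by rewrite raddfMn mulr2n.
Qed.

End DoubleBlocks.

Definition rename_entry k k' (sg : 'I_k -> bool) (tau : 'I_k -> 'I_k') (e : entry k) :
    entry k' :=
  if e is Some (b, v) then Some (b (+) sg v, tau v) else None.

Lemma full_rename m k k' sg (tau : 'I_k -> 'I_k') (X : 'M[entry k]_m) :
  full_design X -> full_design (map_mx (rename_entry sg tau) X).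
Proof. by move=> fX i j; rewrite mxE; case: (X i j) (fX i j) => [[]|]. Qed.

Lemma full_block_mx k m (P Q S T : 'M[entry k]_m) :
  full_design P -> full_design Q -> full_design S -> full_design T ->
  full_design (block_mx P Q S T).
Proof.
move=> fP fQ fS fT i j.
case: (split_ordP i) => i' ->; case: (split_ordP j) => j' ->;
  by rewrite ?(block_mxEul, block_mxEur, block_mxEdl, block_mxEdr).
Qed.

Section Doubling.
Variables (m k l : nat) (s : 'I_k) (t : 'I_k.+1).

Definition lift_fresh (v : 'I_k) : 'I_k.+1 := if v == s then t else lift t v.

(* Writing X = A + x_s E, this is [A + x_s E, A + x_t E; A - x_t E, -A + x_s E]
   (see eval_double_design), the old indeterminates being renumbered by lift t. *)
Definition double_design (X : 'M[entry k]_m) : 'M[entry k.+1]_(m + m) :=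
  block_mx (map_mx (rename_entry xpred0 (lift t)) X)
           (map_mx (rename_entry xpred0 lift_fresh) X)
           (map_mx (rename_entry (pred1 s) lift_fresh) X)
           (map_mx (rename_entry (predC1 s) (lift t)) X).

Definition double_partner (Y : 'M[entry l]_m) : 'M[entry l]_(m + m) :=
  block_mx Y Y Y (map_mx (rename_entry xpredT id) Y).

Variables (c : 'I_k -> nat) (c' : 'I_k.+1 -> nat) (d : 'I_l -> nat).
Variables (X : 'M[entry k]_m) (Y : 'M[entry l]_m).
Hypotheses (HX : weighted_OD c X) (HY : weighted_OD d Y) (HXY : amicable X Y).

Lemma eval_double_partner (R : comNzRingType) (y : 'I_l -> R) :
  eval_mx y (double_partner Y) =
  block_mx (eval_mx y Y) (eval_mx y Y) (eval_mx y Y) (- eval_mx y Y).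
Proof.
rewrite /eval_mx map_block_mx; congr block_mx; apply/matrixP => i j; rewrite !mxE.
by case: (Y i j) => [[b v]|] /=; rewrite ?oppr0 // signr_addb expr1 mulrN1 mulNr.
Qed.

Section DoubleEvaluation.
Variables (R : comNzRingType) (x : 'I_k.+1 -> R).

Let a (v : 'I_k) := if v == s then 0 else x (lift t v).
Let A := eval_mx a X.
Let E := eval_mx (fun v => (v == s)%:R : R) X.

Lemma eval_double_design :
  eval_mx x (double_design X) =
  block_mx (A + x (lift t s) *: E) (A + x t *: E) (A - x t *: E) (- A + x (lift t s) *: E).
Proof.
rewrite /A /E /a /eval_mx map_block_mx.
congr block_mx; apply/matrixP => i j; rewrite !mxE; case: (X i j) => [[b v]|] /=;
  rewrite /lift_fresh; try by rewrite !mulr0 ?oppr0 ?addr0.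
all: by case: (eqVneq v s) => [vs|_]; rewrite ?vs ?eqxx /= ?signr_addb; ring.
Qed.

Lemma double_design_gram :
  c' t = c s -> (forall v, c' (lift t v) = if v == s then c s else (c v).*2) ->
  eval_mx x (double_design X) *m (eval_mx x (double_design X))^T =
  (\sum_(j < k.+1) (c' j)%:R * x j ^+ 2)%:M.
Proof.
move=> Ct Clift.
have EE : E *m E^T = (c s)%:R%:M.
  rewrite HX (bigD1 s) //= eqxx expr1n mulr1 big1 ?addr0 // => v /negbTE ->.
  by rewrite expr2 !mulr0.
have AE : A *m E^T + E *m A^T = 0.
  by apply: weighted_OD_polar HX _ => v; rewrite /a; case: eqP; rewrite ?mul0r ?mulr0.
rewrite eval_double_design (double_block_gram _ _ (HX a) EE AE); congr (_%:M).
rewrite (bigD1_ord t) //= Ct [in RHS](bigD1 s) //= [in LHS](bigD1 s) //=.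
rewrite /a !eqxx Clift eqxx.
under [in LHS]eq_bigr => v /negbTE nvs do rewrite nvs.
under [in RHS]eq_bigr => v /negbTE nvs do rewrite Clift nvs -addnn natrD mulrDl.
by rewrite big_split /= expr2 mulr0 mulr0 add0r -mulr2n; ring.
Qed.

Lemma double_design_amicable (y : 'I_l -> R) :
  eval_mx x (double_design X) *m (eval_mx y (double_partner Y))^T =
  eval_mx y (double_partner Y) *m (eval_mx x (double_design X))^T.
Proof.
rewrite eval_double_design eval_double_partner.
exact: (double_block_amicable _ _ (HXY a y) (HXY _ y)).
Qed.

End DoubleEvaluation.

Lemma double_partner_weighted_OD : weighted_OD (fun j => (d j).*2) (double_partner Y).
Proof.
move=> R y; rewrite eval_double_partner (double_partner_gram (HY y)) -sumrMnl.
by congr (_%:M); apply: eq_bigr => j _; rewrite -addnn natrD mulrDl mulr2n.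
Qed.

End Doubling.

Lemma full_weighted_AOD_double m k l (c : 'I_k -> nat) (d : 'I_l -> nat)
    (s : 'I_k) (t : 'I_k.+1) (c' : 'I_k.+1 -> nat) :
  c' t = c s -> (forall v, c' (lift t v) = if v == s then c s else (c v).*2) ->
  full_weighted_AOD m c d -> full_weighted_AOD (m + m) c' (fun j => (d j).*2).
Proof.
move=> Ct Clift [X [Y [[HX HY HXY] fX fY]]].
exists (double_design s t X), (double_partner Y); split; first split.
- by move=> R x; apply: double_design_gram.
- exact: double_partner_weighted_OD.
- by move=> R x y; apply: double_design_amicable.
- by apply: full_block_mx; apply: full_rename.
- by apply: full_block_mx => //; apply: full_rename.
Qed.

Lemma exists_full_AOD_double m (c c' d d' : seq nat) (s t : nat) :
  (s < size c)%N -> (t <= size c)%N -> size c' = (size c).+1 -> size d' = size d ->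
  nth 0%N c' t = nth 0%N c s ->
  (forall v, (v < size c)%N ->
     nth 0%N c' (bump t v) = if v == s then nth 0%N c s else (nth 0%N c v).*2) ->
  (forall j, nth 0%N d' j = (nth 0%N d j).*2) ->
  exists_full_AOD m c d -> exists_full_AOD (m + m) c' d'.
Proof.
move=> lt_s le_t Ec' Ed' Ct Clift Cd /full_weighted_AOD_nth AOD.
have lt_t : (t < (size c).+1)%N by [].
apply: (exists_full_AOD_weighted Ec' Ed' _ _
  (full_weighted_AOD_double (s := Ordinal lt_s) (t := Ordinal lt_t)
     (c' := fun j => nth 0%N c' j) Ct _ AOD)) => // v.
exact: Clift.
Qed.

Definition family_weights (w j : nat) : seq nat :=
  ([:: 2 ^ (j + 2); 2 ^ (j + 2); 2 ^ (j + 2); w.*2; w.*2]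
     ++ [seq w * 2 ^ i | i <- iota 2 j])%N.

Definition family_partner_weights (w j : nat) : seq nat :=
  [:: 2 ^ (j + 2); 2 ^ (j + 2); 2 ^ (j + 2); w * 2 ^ (j + 2)]%N.

Lemma size_family_weights w j : size (family_weights w j) = (j + 5)%N.
Proof. by rewrite size_cat size_map size_iota addnC. Qed.

Lemma exists_full_AOD_family w m j :
  exists_full_AOD m [:: 2; 2; 2; w.*2] [:: 2; 2; 2; w.*2] ->
  exists_full_AOD (2 ^ j.+1 * m) (family_weights w j) (family_partner_weights w j).
Proof.
have double_pow i : (2 ^ (i.+1 + 2) = (2 ^ (i + 2)).*2)%N by rewrite addSn expnS mul2n.
move=> base; elim: j => [|j IHj].
  rewrite expn1 mul2n -addnn.
  apply: (exists_full_AOD_double (s := 3) (t := 4)) base => //.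
    by case=> [|[|[|[|v]]]].
  by case=> [|[|[|[|i]]]] //=; rewrite ?nth_nil // -!muln2 -mulnA.
rewrite expnS -mulnA mul2n -addnn.
apply: (exists_full_AOD_double (s := 3) (t := 4)) IHj => //.
- by rewrite !size_family_weights addSn.
- move=> v; rewrite size_family_weights.
  case: v => [|[|[|[|[|v]]]]] lt_v; rewrite /= ?double_pow //.
    by rewrite -!muln2 -mulnA.
  rewrite (nth_map 0%N) ?(nth_map 0%N) ?size_iota ?nth_iota; try lia.
  by rewrite addSn expnS -!mul2n mulnCA.
- by case=> [|[|[|[|i]]]] //=; rewrite ?nth_nil ?double_pow // -!mul2n mulnCA.
Qed.

Theorem mainTheorem6 :
  [/\ exists_full_AOD 16 [:: 2; 2; 2; 10]%N [:: 2; 2; 2; 10]%N,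
      exists_full_AOD 24 [:: 2; 2; 2; 18]%N [:: 2; 2; 2; 18]%N,
      (forall n : nat, (4 < n)%N ->
         exists_full_AOD (2 ^ n)
           ([:: 2 ^ (n - 3); 2 ^ (n - 3); 2 ^ (n - 3); 10; 10]
              ++ [seq 5 * 2 ^ j | j <- iota 2 (n - 5)])%N
           [:: 2 ^ (n - 3); 2 ^ (n - 3); 2 ^ (n - 3); 5 * 2 ^ (n - 3)]%N)
    & (forall n : nat, (3 < n)%N ->
         exists_full_AOD (3 * 2 ^ n)
           ([:: 2 ^ (n - 2); 2 ^ (n - 2); 2 ^ (n - 2); 18; 18]
              ++ [seq 9 * 2 ^ j | j <- iota 2 (n - 4)])%N
           [:: 2 ^ (n - 2); 2 ^ (n - 2); 2 ^ (n - 2); 9 * 2 ^ (n - 2)]%N)].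
Proof.
split; [exact: exists_full_AOD_16 | exact: exists_full_AOD_24 | move=> n lt4n | move=> n lt3n].
- have [j ->] : exists j, n = (j + 5)%N by exists (n - 5)%N; lia.
  have -> : (j + 5 - 3 = j + 2)%N by lia.
  have -> : (j + 5 - 5 = j)%N by lia.
  rewrite (_ : 2 ^ (j + 5) = 2 ^ j.+1 * 16)%N; last by rewrite expnS expnD; lia.
  exact: (exists_full_AOD_family (w := 5) j exists_full_AOD_16).
- have [j ->] : exists j, n = (j + 4)%N by exists (n - 4)%N; lia.
  have -> : (j + 4 - 2 = j + 2)%N by lia.
  have -> : (j + 4 - 4 = j)%N by lia.
  rewrite (_ : 3 * 2 ^ (j + 4) = 2 ^ j.+1 * 24)%N; last by rewrite expnS expnD; lia.
  exact: (exists_full_AOD_family (w := 9) j exists_full_AOD_24).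
Qed.
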